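(* Let $\mathbf{B}\in\dot{\mathbb{P}}(\mathbb{L}(\mathbf{C}))$. If $\mathbf{B}$ is singular for $\mathcal{D}(\mathbf{C},\Omega)$, then $\mathbf{B}$ is irreducible for $\mathcal{D}(\mathbf{C},\Omega)$.
   Context: Events are binary random variables on a population $\Omega$; $\overline{X}=1-X$; $\mathbb{L}(\mathbf{C})=\mathbf{C}\cup\{\overline{X}:X\in\mathbf{C}\}$; $\dot{\mathbb{P}}(\mathbb{L}(\mathbf{C}))$ is the set of subsets of $\mathbb{L}(\mathbf{C})$ not containing both $X$ and $\overline{X}$; $(L)_{\mathbf{c}}$ is the value of literal $L$ under assignment $\mathbf{c}$; $\bigwedge(\mathbf{B})=\min_{L\in\mathbf{B}}L$. Potential outcomes $\mathcal{D}(\mathbf{C},\Omega)$: $D_{\mathbf{c}}(\omega)\in\{0,1\}$. $\mathbf{B}$ is a sufficient cause for $D$ relative to $\mathbf{C}$ for $\omega^*$ if some $\mathbf{c}^*$ has $(\bigwedge(\mathbf{B}))_{\mathbf{c}^*}=1$ and $D_{\mathbf{c}}(\omega^* )=1$ whenever $(\bigwedge(\mathbf{B}))_{\mathbf{c}}=1$; minimal if no proper subset is such; singular for $\omega^*$ if it is a minimal sufficient cause for $\omega^*$ and no other $\mathbf{B}'\in\dot{\mathbb{P}}(\mathbb{L}(\mathbf{C}))$ is a minimal sufficient cause for $\omega^*$; singular for $\mathcal{D}(\mathbf{C},\Omega)$ if singular for some $\omega^*\in\Omega$. A sufficient cause representation $(\mathbf{A},\mathfrak{B})$ for $\mathcal{D}(\mathbf{C},\Omega)$: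 binary random variables $\mathbf{A}=\langle A_1,\dots,A_p\rangle$ on $\Omega$ unaffected by interventions on $\mathbf{C}$ and $\mathfrak{B}=\langle\mathbf{B}_1,\dots,\mathbf{B}_p\rangle$, $\mathbf{B}_i\in\dot{\mathbb{P}}(\mathbb{L}(\mathbf{C}))$, with $D_{\mathbf{c}}(\omega)=1$ iff some $j$ has $A_j(\omega)=1$ and $(\bigwedge(\mathbf{B}_j))_{\mathbf{c}}=1$. $\mathbf{B}$ is irreducible for $\mathcal{D}(\mathbf{C},\Omega)$ if every such representation has some $\mathbf{B}_i\supseteq\mathbf{B}$. *)

From mathcomp Require Import all_boot.
Set Implicit Arguments. Unset Strict Implicit. Unset Printing Implicit Defensive.

(* The causes C = <X_0,...,X_{n-1}> are indexed by 'I_n.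
   A literal is a pair (i, b): (i, true) is X_i, (i, false) is its complement.
   L(C) is thus the finite type 'I_n * bool. *)
Definition literal (n : nat) := ('I_n * bool)%type.

Definition assignment (n : nat) := 'I_n -> bool.

Definition lit_val n (c : assignment n) (L : literal n) : bool :=
  if L.2 then c L.1 else ~~ c L.1.

(* B in dotP(L(C)) : no X together with its complement. *)
Definition consistent n (B : {set literal n}) : bool :=
  [forall i : 'I_n, ~~ (((i, true) \in B) && ((i, false) \in B))].

Definition conj_val n (B : {set literal n}) (c : assignment n) : bool :=
  [forall L in B, lit_val c L].

Definition outcomes (n : nat) (Omega : Type) := assignment n -> Omega -> bool.

Definition sufficient_cause n Omega (D : outcomes n Omega)
    (B : {set literal n}) (w : Omega) : Prop :=
  (exists c : assignment n, conj_val B c) /\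
  (forall c : assignment n, conj_val B c -> D c w).

Definition minimal_sufficient_cause n Omega (D : outcomes n Omega)
    (B : {set literal n}) (w : Omega) : Prop :=
  sufficient_cause D B w /\
  (forall B' : {set literal n}, B' \proper B -> ~ sufficient_cause D B' w).

Definition singular_for n Omega (D : outcomes n Omega)
    (B : {set literal n}) (w : Omega) : Prop :=
  minimal_sufficient_cause D B w /\
  (forall B' : {set literal n}, consistent B' ->
     minimal_sufficient_cause D B' w -> B' = B).

Definition singular n Omega (D : outcomes n Omega) (B : {set literal n}) : Prop :=
  exists w : Omega, singular_for D B w.

(* Sufficient cause representation (A, frakB) with p components.
   The A_j are functions of omega only, hence unaffected by interventions on C. *)
Definition sc_representation n Omega (D : outcomes n Omega) (p : nat)
    (A : 'I_p -> Omega -> bool) (Bs : 'I_p -> {set literal n}) : Prop :=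
  (forall j, consistent (Bs j)) /\
  (forall (c : assignment n) (w : Omega),
     D c w = [exists j : 'I_p, A j w && conj_val (Bs j) c]).

Definition irreducible n Omega (D : outcomes n Omega) (B : {set literal n}) : Prop :=
  forall (p : nat) (A : 'I_p -> Omega -> bool) (Bs : 'I_p -> {set literal n}),
    sc_representation D A Bs -> exists i : 'I_p, B \subset Bs i.

(* Let B be singular for D at the individual w: it is the unique minimal
   sufficient cause of D for w.  The argument has three ingredients.
   - Every consistent conjunction of literals is satisfiable, and
     consistency is inherited by subsets.
   - Every sufficient cause contains a minimal sufficient cause (induction on
     its cardinality), so a consistent sufficient cause for w contains B when
     B is singular for w.
   - In any sufficient cause representation (A, Bs) of D, some component j
     fires for w (since D_c(w) = 1 for a c satisfying B), and then Bs j is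
     itself a sufficient cause for w.
   Combining these, Bs j contains B, which is irreducibility. *)

From Stdlib Require Import Classical.
From mathcomp Require Import all_boot.

Set Implicit Arguments.
Unset Strict Implicit.

(* A consistent set of literals is satisfied by the assignment making every
   positive literal of B true. *)
Lemma consistent_satisfiable n (B : {set literal n}) :
  consistent B -> exists c : assignment n, conj_val B c.
Proof.
move=> /forallP B_cons; exists (fun i => (i, true) \in B).
apply/forallP=> [[i b]]; apply/implyP; rewrite /lit_val /=.
case: b => // i_neg; apply/negP=> i_pos.
by have := B_cons i; rewrite i_pos i_neg.
Qed.

Lemma consistentS n (B B' : {set literal n}) :
  B' \subset B -> consistent B -> consistent B'.
Proof.
move=> /subsetP sub_B'B /forallP B_cons; apply/forallP=> i.
by apply/negP=> /andP [/sub_B'B pos /sub_B'B neg]; have := B_cons i; rewrite pos neg.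
Qed.

Section MinimalCauses.

Variables (n : nat) (Omega : Type) (D : outcomes n Omega) (w : Omega).

(* Every sufficient cause for w contains a minimal one: descend along proper
   subsets that are still sufficient; the cardinality strictly decreases. *)
Lemma minimal_sufficient_below (S : {set literal n}) :
  sufficient_cause D S w ->
  exists2 S' : {set literal n}, S' \subset S & minimal_sufficient_cause D S' w.
Proof.
move: {2}#|S| (leqnn #|S|) => k; elim: k S => [|k IH] S S_card S_suff.
  exists S => //; split=> // S' /proper_card.
  by rewrite ltnNge (leq_trans S_card (leq0n _)).
have [[S' [S'S S'_suff]]|no_smaller] :=
  classic (exists S' : {set literal n}, S' \proper S /\ sufficient_cause D S' w).
  have S'_card : #|S'| <= k by rewrite -ltnS (leq_trans (proper_card S'S)).
  have [S'' S''S' S''_min] := IH S' S'_card S'_suff.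
  by exists S'' => //; apply: subset_trans S''S' (proper_sub S'S).
by exists S => //; split=> // S' S'S S'_suff; apply: no_smaller; exists S'.
Qed.

(* If B is singular for w, every consistent sufficient cause for w contains B:
   the minimal sufficient cause it contains must be B itself. *)
Lemma singular_below_sufficient (B S : {set literal n}) :
  singular_for D B w -> consistent S -> sufficient_cause D S w -> B \subset S.
Proof.
move=> [_ B_unique] S_cons S_suff.
have [S' S'S S'_min] := minimal_sufficient_below S_suff.
by rewrite -(B_unique S') // (consistentS S'S S_cons).
Qed.

End MinimalCauses.

Lemma representation_component_sufficient n Omega (D : outcomes n Omega)
    p (A : 'I_p -> Omega -> bool) (Bs : 'I_p -> {set literal n}) w j :
  sc_representation D A Bs -> A j w -> sufficient_cause D (Bs j) w.
Proof.
move=> [Bs_cons D_repr] Aj; split; first exact: consistent_satisfiable.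
by move=> c Bj_c; rewrite D_repr; apply/existsP; exists j; rewrite Aj Bj_c.
Qed.

Lemma representation_active_component n Omega (D : outcomes n Omega)
    p (A : 'I_p -> Omega -> bool) (Bs : 'I_p -> {set literal n}) c w :
  sc_representation D A Bs -> D c w -> exists j : 'I_p, A j w.
Proof.
by move=> [_ D_repr]; rewrite D_repr => /existsP [j /andP [Aj _]]; exists j.
Qed.

Theorem mainTheorem13 (n : nat) (Omega : Type) (D : outcomes n Omega)
    (B : {set literal n}) :
  consistent B -> singular D B -> irreducible D B.
Proof.
move=> _ [w B_sing] p A Bs repr.
have [[[[c B_c] B_suff] _] _] := B_sing.
have [j Aj] := representation_active_component repr (B_suff c B_c).
exists j; apply: singular_below_sufficient B_sing _ _.
- by case: repr.
- exact: representation_component_sufficient repr Aj.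
Qed.
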